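(* Let $\mathcal T$ be a triangulation of a compact oriented surface $S$ (possibly with boundary), with vertex set $V$ and boundary vertex set $V_\partial$. For every non-empty subset $A\subseteq V$, $$2|A|-|F(A)|+|Lk(A)|-|A\cap V_\partial|=2\chi(G(A)\setminus\partial S)+\chi(G(A)\cap\partial S).$$
   Context: $F(A)$ is the set of triangles of $\mathcal T$ having at least one vertex in $A$. $Lk(A)$ is the set of pairs $(e,v)$ with $v\in A$, $e$ an edge with no endpoint in $A$, and $e,v$ forming a triangle of $\mathcal T$. $G(A)$ is the union of the open cells (vertices, open edges, open triangles) of $\mathcal T$ having at least one vertex in $A$; for a union $X$ of open cells, $\chi(X)$ denotes the number of $0$-cells minus the number of $1$-cells plus the number of $2$-cells contained in $X$; $G(A)\setminus\partial S$ (resp. $G(A)\cap\partial S$) consists of the cells of $G(A)$ not contained (resp. contained) in $\partial S$. *)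

From mathcomp Require Import all_boot all_order all_algebra.
Set Implicit Arguments. Unset Strict Implicit. Unset Printing Implicit Defensive.
Import GRing.Theory Num.Theory.

Section Tri.
Variable V : finType.
Variable T : {set {set V}}.   (* the triangles (2-simplices), as 3-element vertex sets *)

(* cells of the triangulation: non-empty faces of triangles
   (vertices = 1-element sets, edges = 2-element sets, triangles = 3-element sets) *)
Definition cells : {set {set V}} :=
  [set c : {set V} | (c != set0) && [exists t in T, c \subset t]].

Definition edges : {set {set V}} := [set c in cells | #|c| == 2].

Definition n_tri (e : {set V}) : nat := #|[set t in T | e \subset t]|.

Definition bd_edges : {set {set V}} := [set e in edges | n_tri e == 1].
Definition Vbd : {set V} := [set v | [exists e in bd_edges, v \in e]].

(* cells contained in the boundary dS: boundary vertices and boundary edges *)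
Definition bd_cells : {set {set V}} := bd_edges :|: [set [set v] | v in Vbd].

Definition link_rel (v : V) : rel V := fun u w => [set v; u; w] \in T.

(* a cyclic orientation of a triangle given by an ordered triple (a,b,c);
   its directed edges are (a,b),(b,c),(c,a) *)
Definition dir_edges (o : V * V * V) : seq (V * V) :=
  let: (a, b, c) := o in [:: (a, b); (b, c); (c, a)].

Definition coherent_orientation (o : {set V} -> V * V * V) : Prop :=
  (forall t, t \in T -> let: (a, b, c) := o t in t = [set a; b; c])
  /\ (forall t1 t2 x y, t1 \in T -> t2 \in T -> t1 != t2 ->
        (x, y) \in dir_edges (o t1) -> (x, y) \notin dir_edges (o t2)).

Definition surface_triangulation : Prop :=
  [/\ (forall t, t \in T -> #|t| = 3),
      (forall v : V, exists2 t, t \in T & v \in t),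
      (forall e, e \in edges -> n_tri e = 1 \/ n_tri e = 2),
      (forall v u w, [set v; u] \in edges -> [set v; w] \in edges ->
          v != u -> v != w -> connect (link_rel v) u w)
    & exists o, coherent_orientation o].

Definition F (A : {set V}) : {set {set V}} := [set t in T | t :&: A != set0].

Definition Lk (A : {set V}) : {set {set V} * V} :=
  [set p : {set V} * V | [&& p.2 \in A, p.1 \in edges, p.1 :&: A == set0
                           & p.1 :|: [set p.2] \in T]].

(* G(A): open cells having at least one vertex in A *)
Definition G (A : {set V}) : {set {set V}} := [set c in cells | c :&: A != set0].

Definition chi (X : {set {set V}}) : int :=
  (#|[set c in X | #|c| == 1]|%:Z - #|[set c in X | #|c| == 2]|%:Z
   + #|[set c in X | #|c| == 3]|%:Z)%R.

End Tri.

(* Split the open cells of G(A) by dimension and by whether they lie in ∂S: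
   its vertices are A, its edges are the edges meeting A (in ∂S iff they lie
   in one triangle, in the interior iff in two), and its triangles are F(A).
   The identity then reduces to double counting the incident pairs
   (edge, triangle of F(A)): a triangle has three edges, an edge meeting A lies
   in 1 or 2 triangles, all of them in F(A), and an edge avoiding A lies in as
   many triangles of F(A) as it has entries in Lk(A). *)
From mathcomp Require Import all_boot all_order all_algebra zify.
Import GRing.Theory Num.Theory.

Lemma card_sep_sum (U : finType) (S : {set U}) (P : pred U) :
  #|[set x in S | P x]| = \sum_(x in S) P x.
Proof.
rewrite -sum1dep_card big_mkcondr /=.
by apply: eq_bigr => x _; case: (P x).
Qed.

Lemma card_pair_sum (I J : finType) (S : {set I * J}) (D : {set I}) :
  (forall p, p \in S -> p.1 \in D) ->
  #|S| = \sum_(x in D) #|[set y | (x, y) \in S]|.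
Proof.
move=> SD; under eq_bigr => x _ do rewrite -sum1dep_card.
rewrite pair_big_dep -sum1_card; apply: eq_bigl => -[x y] /=.
by case: (boolP ((x, y) \in S)) => [/SD -> | _]; rewrite ?andbF.
Qed.

Lemma card_singletons (U : finType) (X : {set {set U}}) :
  #|[set c in X | #|c| == 1]| = #|[set x | [set x] \in X]|.
Proof.
rewrite -(card_imset _ (@set1_inj U)); apply: eq_card => c; rewrite inE.
apply/andP/imsetP => [[cX /cards1P[x cx]] | [x + ->]].
  by exists x; rewrite // inE -cx.
by rewrite inE cards1.
Qed.

Section SurfaceCounting.

Variables (V : finType) (T : {set {set V}}).
Hypothesis triangle_card : forall t, t \in T -> #|t| = 3.
Hypothesis vertex_in_triangle : forall v : V, exists2 t, t \in T & v \in t.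
Hypothesis n_tri_edge : forall e, e \in edges T -> n_tri T e = 1 \/ n_tri T e = 2.

Definition meeting_edges (A : {set V}) (k : nat) : {set {set V}} :=
  [set e in edges T | (e :&: A != set0) && (n_tri T e == k)].

Lemma card_edges_sub_triangle t :
  t \in T -> #|[set e in edges T | e \subset t]| = 3.
Proof.
move=> tT; rewrite -[3]/('C(3, 2)) -(triangle_card _ tT) -cards_draws.
apply: eq_card => e; rewrite !inE [RHS]andbC -andbA; apply: andb_idl => /andP[e2 et].
by rewrite -card_gt0 (eqP e2) /=; apply/existsP; exists t; rewrite tT.
Qed.

Lemma card_F_sup_disjoint_edge A e :
  e \in edges T -> e :&: A == set0 ->
  #|[set t in F T A | e \subset t]| = #|[set v | (e, v) \in Lk T A]|.
Proof.
move=> eE eA.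
have e2 : #|e| = 2 by move: eE; rewrite inE => /andP[_ /eqP].
have notin_e v : v \in A -> v \notin e.
  by move=> vA; apply: contraTN eA => ve; apply/set0Pn; exists v; rewrite inE ve.
rewrite -(@card_in_imset _ _ (fun v => v |: e)); last first.
  move=> v w; rewrite !inE => /and4P[vA _ _ _] _ evw.
  have : v \in w |: e by rewrite -evw setU11.
  by case/setU1P => // ve; case/negP: (notin_e v vA).
apply: eq_card => t; rewrite !inE; apply/idP/imsetP.
  case/andP => /andP[tT /set0Pn[x]]; rewrite inE => /andP[xt xA] et.
  have tx : t = x |: e.
    apply/eqP; rewrite eq_sym eqEcard subUset sub1set xt et /=.
    by rewrite triangle_card // cardsU1 notin_e // e2.
  by exists x; rewrite // inE [_ \in Lk _ _]inE /= xA eE eA setUC -tx.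
case=> v; rewrite inE [_ \in Lk _ _]inE /= => /and4P[vA _ _ vT] ->.
rewrite setUC vT subsetUl andbT; apply/set0Pn; exists v.
by rewrite !inE vA eqxx orbT.
Qed.

Lemma card_F_sup_edge A e :
  e \in edges T ->
  #|[set t in F T A | e \subset t]| = #|[set v | (e, v) \in Lk T A]|
     + ((e :&: A != set0) && (n_tri T e == 1))
     + 2 * ((e :&: A != set0) && (n_tri T e == 2)).
Proof.
move=> eE; have [eA | eA] := eqVneq (e :&: A) set0.
  by rewrite card_F_sup_disjoint_edge ?eA //= muln0 !addn0.
have -> : [set v | (e, v) \in Lk T A] = set0.
  by apply/setP => v; rewrite !inE /= (negbTE eA) !andbF.
have -> : [set t in F T A | e \subset t] = [set t in T | e \subset t].
  apply/setP => t; rewrite !inE -andbA; apply: andb_id2l => _.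
  apply: andb_idl => et; case/set0Pn: eA => x; rewrite inE => /andP[xe xA].
  by apply/set0Pn; exists x; rewrite inE (subsetP et).
by rewrite cards0 -/(n_tri T e); case: (n_tri_edge _ eE) => ->.
Qed.

Lemma card_Lk_sum A :
  #|Lk T A| = \sum_(e in edges T) #|[set v | (e, v) \in Lk T A]|.
Proof. by apply: card_pair_sum => -[e v]; rewrite inE => /and4P[]. Qed.

Lemma triple_card_F A :
  3 * #|F T A| =
  #|Lk T A| + #|meeting_edges A 1| + 2 * #|meeting_edges A 2|.
Proof.
have incidences : 3 * #|F T A| =
    \sum_(e in edges T) #|[set t in F T A | e \subset t]|.
  rewrite mulnC -sum_nat_const.
  under eq_bigr => t /[!inE] /andP[tT _] do
    rewrite -(card_edges_sub_triangle _ tT) card_sep_sum.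
  by rewrite exchange_big; under eq_bigr => e _ do rewrite -card_sep_sum.
rewrite incidences card_Lk_sum !card_sep_sum big_distrr -!big_split /=.
by apply: eq_bigr => e; apply: card_F_sup_edge.
Qed.

Lemma set1_in_G A x : ([set x] \in G T A) = (x \in A).
Proof.
have [t tT xt] := vertex_in_triangle x.
rewrite !inE -andbA; apply/and3P/idP => [[_ _ /set0Pn[y]] | xA].
  by rewrite !inE => /andP[/eqP-> ].
split.
- by apply/set0Pn; exists x; rewrite inE.
- by apply/existsP; exists t; rewrite tT sub1set.
- by apply/set0Pn; exists x; rewrite !inE eqxx.
Qed.

Lemma set1_in_bd_cells x : ([set x] \in bd_cells T) = (x \in Vbd T).
Proof.
rewrite in_setU (mem_imset _ _ (@set1_inj V)).
by rewrite [_ \in bd_edges T]inE [_ \in edges T]inE cards1 andbF.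
Qed.

Lemma edge_in_G A (e : {set V}) : #|e| == 2 ->
  (e \in G T A) = (e \in edges T) && (e :&: A != set0).
Proof. by move=> e2; rewrite !inE e2 andbT. Qed.

Lemma edge_in_bd_cells (e : {set V}) : #|e| == 2 ->
  (e \in bd_cells T) = (e \in edges T) && (n_tri T e == 1).
Proof.
move=> e2; rewrite inE [e \in bd_edges T]inE; apply: orb_idr.
by case/imsetP => x _ ex; rewrite ex cards1 in e2.
Qed.

Lemma triangle_notin_bd_cells (c : {set V}) : #|c| = 3 -> c \notin bd_cells T.
Proof.
move=> c3; rewrite !inE c3 andbF /=.
by apply/imsetP => -[x _ cx]; rewrite cx cards1 in c3.
Qed.

Lemma G_triangleE A (c : {set V}) : #|c| = 3 -> (c \in G T A) = (c \in F T A).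
Proof.
move=> c3; rewrite !inE -card_gt0 c3 /=; congr (_ && _).
apply/existsP/idP => [[t /andP[tT ct]] | cT]; last by exists c; rewrite cT subxx.
by rewrite (_ : c = t) //; apply/eqP; rewrite eqEcard ct triangle_card ?c3.
Qed.

Lemma chi_G_interior A :
  chi (G T A :\: bd_cells T) =
  (#|A :\: Vbd T|%:Z - #|meeting_edges A 2|%:Z + #|F T A|%:Z)%R.
Proof.
rewrite /chi card_singletons.
have -> : [set x | [set x] \in G T A :\: bd_cells T] = A :\: Vbd T.
  by apply/setP => x; rewrite in_set !in_setD set1_in_G set1_in_bd_cells.
have -> : [set c in G T A :\: bd_cells T | #|c| == 2] = meeting_edges A 2.
  apply/setP => e; rewrite [in LHS]in_set in_setD /meeting_edges [in RHS]in_set.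
  have [e2 | e2] := boolP (#|e| == 2); last first.
    by rewrite andbF [e \in edges T]in_set (negbTE e2) andbF.
  rewrite edge_in_G // edge_in_bd_cells // andbT.
  case eE: (e \in edges T) => //=.
  by case: (n_tri_edge _ eE) => ->; rewrite ?andbT ?andbF.
have -> : [set c in G T A :\: bd_cells T | #|c| == 3] = F T A.
  apply/setP => t; rewrite [in LHS]in_set in_setD.
  have [/eqP t3 | t3] := boolP (#|t| == 3).
    by rewrite (negPf (triangle_notin_bd_cells _ t3)) G_triangleE // andbT.
  rewrite andbF; apply/esym/negP => /[!inE] /andP[/triangle_card/eqP].
  by rewrite (negbTE t3).
by [].
Qed.

Lemma chi_G_boundary A :
  chi (G T A :&: bd_cells T) =
  (#|A :&: Vbd T|%:Z - #|meeting_edges A 1|%:Z)%R.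
Proof.
rewrite /chi card_singletons.
have -> : [set x | [set x] \in G T A :&: bd_cells T] = A :&: Vbd T.
  by apply/setP => x; rewrite in_set !in_setI set1_in_G set1_in_bd_cells.
have -> : [set c in G T A :&: bd_cells T | #|c| == 2] = meeting_edges A 1.
  apply/setP => e; rewrite [in LHS]in_set in_setI /meeting_edges [in RHS]in_set.
  have [e2 | e2] := boolP (#|e| == 2); last first.
    by rewrite andbF [e \in edges T]in_set (negbTE e2) andbF.
  rewrite edge_in_G // edge_in_bd_cells // andbT.
  by case: (e \in edges T); rewrite /= ?andbF // andbC.
have -> : [set c in G T A :&: bd_cells T | #|c| == 3] = set0.
  apply/setP => t; rewrite in_set in_setI in_set0.
  have [/eqP t3 | _] := boolP (#|t| == 3); last by rewrite andbF.
  by rewrite (negPf (triangle_notin_bd_cells _ t3)) andbF.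
by rewrite cards0 addr0.
Qed.

End SurfaceCounting.

Local Open Scope ring_scope.

Theorem lemma2p5 (V : finType) (T : {set {set V}}) (A : {set V}) :
  surface_triangulation T -> A != set0 ->
  2 * #|A|%:Z - #|F T A|%:Z + #|Lk T A|%:Z - #|A :&: Vbd T|%:Z
  = 2 * chi (G T A :\: bd_cells T) + chi (G T A :&: bd_cells T).
Proof.
case=> triangle_card vertex_in_triangle n_tri_edge _ _ _.
rewrite chi_G_interior // chi_G_boundary //.
have incidences := @triple_card_F V T triangle_card n_tri_edge A.
have splitA := cardsID (Vbd T) A.
lia.
Qed.
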